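(* Let $\langle \mathcal{N},\mathcal{S},\mathcal{A},P,r,\gamma\rangle$ be a Markov game as described in the context. Let $G_d=(\mathcal{N},\mathcal{E}_d)$ be a directed acyclic graph whose vertex labels follow a topological order, and let $\pi$ be a (possibly stochastic) joint policy associated with $G_d$ that is $G_d$-locally optimal. Let $G_c=(\mathcal{N},\mathcal{E}_c)$ be a coordination graph of the state-action value function $Q^{\pi}$. If $$N_d(i)=N_c(i^{[+]})\quad\text{for all } i\in\mathcal{N},$$ then $\pi$ is globally optimal, i.e. $V^{\pi}(s)=V^*(s)$ for all $s\in\mathcal{S}$.
   Context: A Markov game is a tuple $\langle \mathcal{N},\mathcal{S},\mathcal{A},P,r,\gamma\rangle$ with agents $\mathcal{N}=\{1,\dots,n\}$, finite state space $\mathcal{S}$, joint action space $\mathcal{A}=\prod_{i=1}^n\mathcal{A}_i$ with each $\mathcal{A}_i$ finite, transition kernel $P(s'|s,a)$, reward $r:\mathcal{S}\times\mathcal{A}\to\mathbb{R}$ and discount $\gamma\in[0,1)$. For a joint policy $\pi$ (mapping states to distributions over $\mathcal{A}$), $V^{\pi}(s)=\mathbb{E}[\sum_{t\ge0}\gamma^t r(s^t,a^t)\mid s^0=s]$ with $a^t\sim\pi(\cdot|s^t)$, $Q^{\pi}(s,a)$ is the same expectation conditioned additionally on $a^0=a$, and $V^*=\max_\pi V^\pi$ is the optimal value function (the unique fixed point of $TV(s)=\max_a[r(s,a)+\gamma\sum_{s'}P(s'|s,a)V(s')]$). Notation: for $S\subseteq\mathcal{N}$, $-S=\mathcal{N}\setminus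 S$, $-i=-\{i\}$, $a_S=(a_j)_{j\in S}$, $\mathcal{A}_S=\prod_{j\in S}\mathcal{A}_j$; $i^-=\{1,\dots,i-1\}$, $i^+=\{i+1,\dots,n\}$, $i^{[+]}=\{i,\dots,n\}$. Coordination graph (CG): an undirected graph $G_c=(\mathcal{N},\mathcal{E}_c)$ is a CG of a function $Q:\mathcal{S}\times\mathcal{A}\to\mathbb{R}$ if there exist functions $Q_{ij}:\mathcal{S}\times\mathcal{A}_i\times\mathcal{A}_j\to\mathbb{R}$ for each edge $(i,j)\in\mathcal{E}_c$ and $Q_i:\mathcal{S}\times\mathcal{A}_i\to\mathbb{R}$ for each $i\in\mathcal{N}$ such that $Q(s,a)=\sum_{i}Q_i(s,a_i)+\sum_{(i,j)\in\mathcal{E}_c}Q_{ij}(s,a_i,a_j)$. (The paper assumes w.l.o.g. $G_c$ connected, so that $Q(s,a)=\sum_{(i,j)\in\mathcal{E}_c}Q_{ij}(s,a_i,a_j)$.) $N_c(i)$ denotes the neighbors of $i$ in $G_c$, and for $S\subseteq\mathcal{N}$, $N_c(S)=(\bigcup_{i\in S}N_c(i))\setminus S$. Action dependency graph (ADG): a directed acyclic graph $G_d=(\mathcal{N},\mathcal{E}_d)$; $N_d(i)=\{j:(j,i)\in\mathcal{E}_d\}$ and $N_d[i]=N_d(i)\cup\{i\}$. Agents are indexed in a topological order, i.e. $j<i$ for all $j\in N_d(i)$. A joint policy $\pi$ is associated with $G_d$ if $\pi(a|s)=\prod_{i=1}^n\pi_i(a_i|s,a_{N_d(i)})$ with individual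 policies $\pi_i:\mathcal{S}\times\mathcal{A}_{N_d(i)}\to\Delta(\mathcal{A}_i)$. Expectation convention: for fixed $s$ and a fixed partial action $a_{N_d(i)}$, $\mathbb{E}_{\pi'_i,\pi_{-N_d[i]}}[\cdot]$ denotes the expectation when the remaining actions $a_j$, $j\notin N_d(i)$, are drawn in increasing order of index, $a_j\sim\pi_j(\cdot|s,a_{N_d(j)})$ for $j\neq i$ and $a_i\sim\pi'_i(\cdot|s,a_{N_d(i)})$ (using the fixed components and previously drawn ones); $\mathbb{E}_{\pi_{-N_d(i)}}$ is the same with $\pi'_i=\pi_i$. $G_d$-locally optimal: $\pi$ associated with $G_d$ is $G_d$-locally optimal if for all $i\in\mathcal{N}$, $s\in\mathcal{S}$, $a_{N_d(i)}\in\mathcal{A}_{N_d(i)}$: $\mathbb{E}_{\pi_{-N_d(i)}}[Q^{\pi}(s,a)]=\max_{\pi'_i(\cdot|s,a_{N_d(i)})}\mathbb{E}_{\pi'_i,\pi_{-N_d[i]}}[Q^{\pi}(s,a)]$, the maximum being over distributions on $\mathcal{A}_i$. *)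

From HB Require Import structures.
From mathcomp Require Import all_boot all_order all_algebra.
From mathcomp Require Import all_classical all_reals all_analysis.
Set Implicit Arguments. Unset Strict Implicit. Unset Printing Implicit Defensive.
Import Order.TTheory GRing.Theory Num.Theory.
Import numFieldNormedType.Exports.
Local Open Scope ring_scope.
Local Open Scope classical_set_scope.

Section MarkovGame.
Variables (R : realType) (n : nat) (S : finType) (Ai : 'I_n -> finType).

Definition jact := {dffun forall i : 'I_n, Ai i}.

Definition is_dist (T : finType) (p : T -> R) :=
  (forall x, 0 <= p x) /\ \sum_(x : T) p x = 1.

Variables (P : S -> jact -> S -> R) (r : S -> jact -> R) (gamma : R).

Definition is_markov_game :=
  (forall s a, is_dist (P s a)) /\ (0 <= gamma /\ gamma < 1).

(* joint (stationary) policy: pi s a = pi(a|s) *)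
Definition joint_policy := S -> jact -> R.
Definition is_joint_policy (pi : joint_policy) := forall s, is_dist (pi s).

(* ER pi t s = E[ r(s^t,a^t) | s^0 = s ],  a^t ~ pi(.|s^t), s^{t+1} ~ P(.|s^t,a^t) *)
Fixpoint ER (pi : joint_policy) (t : nat) (s : S) : R :=
  match t with
  | 0 => \sum_(a : jact) pi s a * r s a
  | t'.+1 => \sum_(a : jact) pi s a * \sum_(s' : S) P s a s' * ER pi t' s'
  end.

(* ERa pi t s a = E[ r(s^t,a^t) | s^0 = s, a^0 = a ] *)
Definition ERa (pi : joint_policy) (t : nat) (s : S) (a : jact) : R :=
  match t with
  | 0 => r s a
  | t'.+1 => \sum_(s' : S) P s a s' * ER pi t' s'
  end.

Definition V (pi : joint_policy) (s : S) : R :=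
  limn (series (fun t => gamma ^+ t * ER pi t s)).

Definition Q (pi : joint_policy) (s : S) (a : jact) : R :=
  limn (series (fun t => gamma ^+ t * ERa pi t s a)).

Definition Vstar (s : S) : R :=
  sup [set V pi s | pi in [set pi | is_joint_policy pi]].

(* ADG: edge relation Ed j i means (j,i) in E_d; topological labelling *)
Definition topo_dag (Ed : rel 'I_n) := forall i j : 'I_n, Ed j i -> (j < i)%N.
Definition Nd (Ed : rel 'I_n) (i : 'I_n) : {set 'I_n} := [set j | Ed j i].

Definition undirected (Ec : rel 'I_n) := symmetric Ec /\ irreflexive Ec.
Definition Nc (Ec : rel 'I_n) (X : {set 'I_n}) : {set 'I_n} :=
  (\bigcup_(k in X) [set j | Ec k j]) :\: X.
Definition iplus (i : 'I_n) : {set 'I_n} := [set j : 'I_n | (i <= j)%N].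

(* G_c = (N, Ec) is a coordination graph of Qf; each undirected edge {i,j}
   is counted once, as the ordered pair with i < j *)
Definition is_CG (Ec : rel 'I_n) (Qf : S -> jact -> R) :=
  exists (Q1 : forall i : 'I_n, S -> Ai i -> R)
         (Q2 : forall i j : 'I_n, S -> Ai i -> Ai j -> R),
  forall s a, Qf s a = \sum_(i : 'I_n) Q1 i s (a i)
     + \sum_(i : 'I_n) \sum_(j : 'I_n | (i < j)%N && Ec i j) Q2 i j s (a i) (a j).

(* individual policies pi_i(a_i | s, a_{N_d(i)}): encoded as functions of the
   whole joint action that only depend on the components in N_d(i) *)
Definition ind_policy := forall i : 'I_n, S -> jact -> Ai i -> R.

Definition ind_policies_on (Ed : rel 'I_n) (pol : ind_policy) :=
  (forall i s a, is_dist (pol i s a)) /\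
  (forall i s (a a' : jact), (forall j, j \in Nd Ed i -> a j = a' j) ->
      pol i s a = pol i s a').

Definition joint_of (pol : ind_policy) : joint_policy :=
  fun s a => \prod_(i : 'I_n) pol i s a (a i).

(* E_{pi'_i, pi_{-N_d[i]}}[Q^pi(s,a)] for fixed s and fixed a_{N_d(i)} = b_{N_d(i)},
   where q = pi'_i(.|s,a_{N_d(i)}) *)
Definition Eloc (Ed : rel 'I_n) (pol : ind_policy) (i : 'I_n) (s : S)
    (b : jact) (q : Ai i -> R) : R :=
  \sum_(a : jact | [forall j in Nd Ed i, a j == b j])
     (\prod_(j : 'I_n | j \notin Nd Ed i)
          (if j == i then q (a i) else pol j s a (a j)))
     * Q (joint_of pol) s a.

Definition locally_optimal (Ed : rel 'I_n) (pol : ind_policy) :=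
  forall (i : 'I_n) (s : S) (b : jact),
    Eloc Ed pol s b (pol i s b) =
    sup [set Eloc Ed pol s b q | q in [set q : Ai i -> R | is_dist q]].

End MarkovGame.

From HB Require Import structures.
From mathcomp Require Import all_boot all_order all_algebra.
From mathcomp Require Import all_classical all_reals all_analysis.
From mathcomp Require Import lra.
Import Order.TTheory GRing.Theory Num.Theory.
Import numFieldNormedType.Exports.
Local Open Scope ring_scope.

(* Fix a state s and draw the agents' actions one by one in the topological
   order.  For an agent k, split the coordination-graph decomposition of
   Q^pi(s,.) into the terms involving only agents < k and the rest.  Since
   N_d(k) = N_c(k^[+]), the rest only sees the agents < k through a_{N_d(k)},
   and so do the policies of the agents > k; averaging over the agents > k,
   the local optimality of pi_k therefore says that resampling the action of
   agent k from pi_k, given the earlier actions, cannot decrease the expected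
   value of Q^pi.  Resampling agents n-1, ..., 0 in turn gives
   Q^pi(s,a) <= V^pi(s) for every joint action a, and the policy improvement
   argument V^pi' <= V^pi + gamma^N C (for all N) makes pi optimal. *)

Lemma leq_down_ind (m : nat) (Pr : nat -> Prop) :
  Pr m -> (forall k, (k < m)%N -> Pr k.+1 -> Pr k) ->
  forall k, (k <= m)%N -> Pr k.
Proof.
move=> Pm IH k; move Hd: (m - k)%N => d; elim: d k Hd => [|d IHd] k Hd hk.
  by have -> : k = m by apply/eqP; rewrite eqn_leq hk -subn_eq0 Hd.
have hkm : (k < m)%N by rewrite -subn_gt0 Hd.
by apply: IH hkm (IHd k.+1 _ hkm); rewrite subnS Hd.
Qed.

Lemma sum_delta (R : nzRingType) (T : finType) (y : T) (F : T -> R) :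
  \sum_(x : T) (x == y)%:R * F x = F y.
Proof.
rewrite (bigD1 y) //= eqxx mul1r big1 ?addr0 // => x /negbTE ->.
by rewrite mul0r.
Qed.

Section SequentialSampling.
Context {R : realType} {n : nat} {Ai : 'I_n -> finType}.
Local Notation act := (jact Ai).

Definition set_act (c : act) (j : 'I_n) (x : Ai j) : act :=
  finfun (dfwith (fun i => c i) j x).

Lemma set_act_eq c j x : set_act c j x j = x.
Proof. by rewrite /set_act ffunE dfwithin. Qed.

Lemma set_act_neq c j x i : j != i -> set_act c j x i = c i.
Proof. by move=> h; rewrite /set_act ffunE dfwithout. Qed.

Lemma set_act_id c j : set_act c j (c j) = c.
Proof.
apply/ffunP => i; case: (eqVneq j i) => [<-|h]; first by rewrite set_act_eq.
by rewrite set_act_neq.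
Qed.

(* K j c is the law of the action of agent j given the actions c already drawn *)
Definition kernel := forall j : 'I_n, act -> Ai j -> R.

Fixpoint seq_expect (K : kernel) (js : seq 'I_n) (f : act -> R) (c : act) : R :=
  match js with
  | [::] => f c
  | j :: js' => \sum_(x : Ai j) K j c x * seq_expect K js' f (set_act c j x)
  end.

Definition agents_from (k : nat) : seq 'I_n := pmap insub (iota k (n - k)).

Lemma agents_from_cons {k} (hk : (k < n)%N) :
  agents_from k = Ordinal hk :: agents_from k.+1.
Proof.
rewrite /agents_from; have -> : (n - k = (n - k.+1).+1)%N by rewrite subnSK.
by rewrite /= insubT.
Qed.

Lemma agents_from_ge k : (n <= k)%N -> agents_from k = [::].
Proof. by move=> h; rewrite /agents_from (eqP h). Qed.

Lemma mem_agents_from k (j : 'I_n) : (j \in agents_from k) = (k <= j)%N.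
Proof.
rewrite /agents_from mem_pmap_sub mem_iota; case: (leqP k j) => //= hkj.
by rewrite subnKC ?ltn_ord // ltnW // (leq_ltn_trans hkj).
Qed.

Definition depends_on {T : Type} (U : pred 'I_n) (g : act -> T) :=
  forall c c' : act, (forall i, U i -> c i = c' i) -> g c = g c'.

Definition causal (K : kernel) := forall j : 'I_n, depends_on (fun i => (i < j)%N) (K j).

Definition agree_below (k : nat) (a c : act) :=
  [forall i : 'I_n, (i < k)%N ==> (a i == c i)].

Lemma agree_belowS (k : 'I_n) a c x :
  agree_below k.+1 a (set_act c k x) = agree_below k a c && (a k == x).
Proof.
apply/forallP/andP => [H|[/forallP H /eqP hx] i]; last first.
  apply/implyP => hi; case: (eqVneq k i) => [<-|hne]; first by rewrite set_act_eq hx.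
  rewrite set_act_neq //; apply: (implyP (H i)).
  rewrite ltn_neqAle -ltnS hi andbT; apply: contra hne => /eqP hh.
  by apply/eqP/val_inj; rewrite /= hh.
split; last by move: (implyP (H k)); rewrite set_act_eq ltnSn; apply.
apply/forallP => i; apply/implyP => hi; move: (implyP (H i)).
rewrite set_act_neq; first by apply; apply: ltnW.
by apply/eqP => hh; move: hi; rewrite -hh ltnn.
Qed.

Lemma sum_prod_kernel_from K f : causal K -> forall k, (k <= n)%N -> forall c,
  \sum_(a : act | agree_below k a c) (\prod_(j : 'I_n | (k <= j)%N) K j a (a j)) * f a
  = seq_expect K (agents_from k) f c.
Proof.
move=> hK; apply: leq_down_ind => [c|k hkn IH c].
  rewrite agents_from_ge //= (big_pred1 c) ?big_pred0 ?mul1r //.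
    by move=> j /=; rewrite leqNgt ltn_ord.
  move=> a /=; apply/idP/eqP => [/forallP H|->].
    by apply/ffunP => i; move: (H i); rewrite ltn_ord /= => /eqP.
  by apply/forallP => i; rewrite eqxx implybT.
rewrite agents_from_cons /=; set ok := Ordinal hkn.
rewrite (partition_big (fun a : act => a ok) xpredT) //=; apply: eq_bigr => x _.
rewrite -IH mulr_sumr; apply: eq_big => [a|a /andP [/forallP H /eqP hx]].
  exact/esym/(agree_belowS ok).
rewrite (bigD1 ok) //= -mulrA; congr (_ * _).
  rewrite hx (hK ok a c) // => i hi.
  by apply/eqP; apply: (implyP (H i)).
congr (_ * _); apply: eq_bigl => j.
case: (eqVneq j ok) => [->|h] /=; first by rewrite ltnn andbF.
rewrite andbT ltn_neqAle; case: (eqVneq k j) => // hh.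
by case/eqP: h; apply/val_inj; rewrite /= hh.
Qed.

Lemma sum_prod_kernel K f c : causal K ->
  \sum_(a : act) (\prod_(j : 'I_n) K j a (a j)) * f a = seq_expect K (agents_from 0) f c.
Proof.
move=> hK; rewrite -(@sum_prod_kernel_from K f hK 0 (leq0n n) c).
apply: eq_big => a; first by apply/esym/forallP => i; rewrite ltn0.
by move=> _; congr (_ * _); apply: eq_bigl.
Qed.

Lemma seq_expectD K js f g c :
  seq_expect K js (fun a => f a + g a) c = seq_expect K js f c + seq_expect K js g c.
Proof.
elim: js c => [|j js IH] c //=.
by rewrite -big_split /=; apply: eq_bigr => x _; rewrite IH mulrDr.
Qed.

Lemma eq_seq_expect K js f g c :
  (forall a, f a = g a) -> seq_expect K js f c = seq_expect K js g c.
Proof.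
move=> h; elim: js c => [|j js IH] c //=.
by apply: eq_bigr => x _; rewrite IH.
Qed.

Lemma eq_seq_expect_kernel K K' js f c :
  (forall j, j \in js -> forall c x, K j c x = K' j c x) ->
  seq_expect K js f c = seq_expect K' js f c.
Proof.
elim: js c => [|j js IH] c h //=.
apply: eq_bigr => x _; rewrite h ?mem_head // IH // => i hi.
by apply: h; rewrite in_cons hi orbT.
Qed.

Lemma seq_expect_invariant K js f c :
  (forall j, j \in js -> forall c, is_dist (K j c)) ->
  (forall j, j \in js -> forall c x, f (set_act c j x) = f c) ->
  seq_expect K js f c = f c.
Proof.
elim: js c => [|j js IH] c hK hf //=.
transitivity (\sum_(x : Ai j) K j c x * f c).
  apply: eq_bigr => x _; rewrite IH ?hf ?mem_head // => i hi.
    by apply: hK; rewrite in_cons hi orbT.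
  by apply: hf; rewrite in_cons hi orbT.
by rewrite -mulr_suml (hK j (mem_head _ _) c).2 mul1r.
Qed.

Lemma seq_expect_depends_on K f (U : pred 'I_n) k : (k <= n)%N ->
  depends_on (fun i => U i || (k <= i)%N) f ->
  (forall j : 'I_n, (k <= j)%N ->
     depends_on (fun i => U i || ((k <= i) && (i < j))%N) (K j)) ->
  depends_on U (seq_expect K (agents_from k) f).
Proof.
move=> hkn hf hK.
pose D j := (k <= j)%N ->
  depends_on (fun i => U i || ((k <= i) && (i < j))%N) (seq_expect K (agents_from j) f).
suff H : D k.
  move=> c c' h; apply: H => // i /orP [/h //|] /andP [h1 h2].
  by move: (leq_trans h2 h1); rewrite ltnn.
apply: (@leq_down_ind n D) => // [_|j hjn IH hkj].
  rewrite agents_from_ge //= => c c' h; apply: hf => i /orP [hi|hi]; apply: h.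
    by rewrite hi.
  by rewrite hi ltn_ord orbT.
rewrite agents_from_cons /= => c c' h.
rewrite (hK (Ordinal hjn) hkj c c') //; apply: eq_bigr => x _; congr (_ * _).
apply: IH (leqW hkj) _ _ _ => i hi.
case: (eqVneq (Ordinal hjn) i) => [<-|hne]; first by rewrite !set_act_eq.
rewrite !set_act_neq //; apply: h; case/orP: hi => [->//|/andP [h1 h2]].
apply/orP; right; rewrite h1 /= ltn_neqAle -ltnS h2 andbT.
by apply/eqP => hh; case/eqP: hne; apply/val_inj; rewrite /= hh.
Qed.

(* The agents < k in U are pinned to a by Dirac kernels, the other agents < k
   are averaged out because the tail expectation only depends on U. *)
Lemma seq_expect_pinned K f (U : pred 'I_n) k (a : act) : (k <= n)%N ->
  (forall i, U i -> (i < k)%N) ->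
  (forall j : 'I_n, (j < k)%N -> U j -> forall c x, K j c x = (x == a j)%:R) ->
  (forall j : 'I_n, (j < k)%N -> ~~ U j -> forall c, is_dist (K j c)) ->
  depends_on U (seq_expect K (agents_from k) f) ->
  forall c, seq_expect K (agents_from 0) f c = seq_expect K (agents_from k) f a.
Proof.
move=> hkn hU hpin hK hW.
pose D j := forall c : act, (forall i, U i -> (i < j)%N -> c i = a i) ->
  seq_expect K (agents_from j) f c = seq_expect K (agents_from k) f a.
suff H : D 0 by move=> c; apply: H.
apply: (@leq_down_ind k D) => // [c hc|j hjk IH c hc].
  by apply: hW => i hi; apply: hc => //; exact: hU.
have hjn : (j < n)%N by apply: leq_trans hkn.
rewrite agents_from_cons /=; set oj := Ordinal hjn.
have hc' : forall x, (forall i : 'I_n, oj != i -> U i -> (i < j.+1)%N ->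
    set_act c oj x i = a i).
  move=> x i hne hi hij; rewrite set_act_neq //; apply: hc => //.
  rewrite ltn_neqAle -ltnS hij andbT.
  by apply/eqP => hh; case/eqP: hne; apply/val_inj; rewrite /= hh.
case hUj: (U oj).
  under eq_bigr => x _ do rewrite (hpin oj hjk hUj c x).
  rewrite sum_delta; apply: IH => i hi hij.
  by case: (eqVneq oj i) => [<-|hne]; [rewrite set_act_eq | apply: hc'].
transitivity (\sum_(x : Ai oj) K oj c x * seq_expect K (agents_from k) f a).
  apply: eq_bigr => x _; rewrite IH // => i hi hij; apply: hc' => //.
  by apply/eqP => hh; move: hi; rewrite -hh hUj.
by rewrite -mulr_suml (hK oj hjk (negbT hUj) c).2 mul1r.
Qed.

Lemma eq_seq_expect_prefix K K' f k : (k <= n)%N ->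
  (forall i : 'I_n, (i < k)%N -> forall c x, K i c x = K' i c x) ->
  (forall c, seq_expect K (agents_from k) f c = seq_expect K' (agents_from k) f c) ->
  forall c, seq_expect K (agents_from 0) f c = seq_expect K' (agents_from 0) f c.
Proof.
move=> hkn hK hW.
pose D j := forall c, seq_expect K (agents_from j) f c = seq_expect K' (agents_from j) f c.
apply: (@leq_down_ind k D) => // j hjk IH c.
have hjn : (j < n)%N by apply: leq_trans hkn.
by rewrite agents_from_cons /=; apply: eq_bigr => x _; rewrite hK //= IH.
Qed.

End SequentialSampling.

Arguments kernel R {n} Ai.

Section LocalToGlobal.
Context {R : realType} {n : nat} {Ai : 'I_n -> finType} {S : finType}.
Local Notation act := (jact Ai).
Context {P : S -> act -> S -> R} {r : S -> act -> R} {gamma : R}.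
Context {Ed Ec : rel 'I_n} {pol : ind_policy R S Ai}.
Hypotheses (hEd : topo_dag Ed) (hpol : ind_policies_on Ed pol)
  (hloc : locally_optimal P r gamma Ed pol) (hEc : symmetric Ec)
  (hNd : forall i, Nd Ed i = Nc Ec (iplus i)).

Lemma mem_Nd_lt {i j : 'I_n} : j \in Nd Ed i -> (j < i)%N.
Proof. by rewrite /Nd inE; apply: hEd. Qed.

Lemma NcP (X : {set 'I_n}) i :
  reflect (i \notin X /\ exists2 m, m \in X & Ec m i) (i \in Nc Ec X).
Proof.
rewrite /Nc !inE; apply: (iffP andP) => [[h1 /bigcupP [m hm]]|[h1 [m hm he]]].
  by rewrite inE => he; split => //; exists m.
by split => //; apply/bigcupP; exists m => //; rewrite inE.
Qed.

Lemma mem_Nd_le (k j i : 'I_n) : (k <= j)%N -> i \in Nd Ed j ->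
  (i \in Nd Ed k) || ((k <= i) && (i < j))%N.
Proof.
move=> hkj hi; have hij := mem_Nd_lt hi.
move: hi; rewrite hNd => /NcP [hi [m hm he]].
case: (leqP k i) => hki; first by rewrite hij orbT.
rewrite orbF hNd; apply/NcP; split; first by rewrite inE -ltnNge.
by exists m => //; move: hm; rewrite !inE => hm; apply: leq_trans hm.
Qed.

Lemma edge_mem_Nd {k i j : 'I_n} : Ec i j -> (i < k)%N -> (k <= j)%N -> i \in Nd Ed k.
Proof.
move=> he hik hkj; rewrite hNd; apply/NcP; split; first by rewrite inE -ltnNge.
by exists j; rewrite ?inE // hEc.
Qed.

Definition pol_kernel (s : S) : kernel R Ai := fun j => pol j s.

Lemma pol_kernel_causal s : causal (pol_kernel s).
Proof. by move=> j c c' h; apply: (proj2 hpol) => i /mem_Nd_lt; apply: h. Qed.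

Lemma pol_kernel_dist s j c : is_dist (pol_kernel s j c).
Proof. exact: (proj1 hpol). Qed.

(* The sampling order behind Eloc: the agents of N_d(k) are pinned to b, agent k
   plays q and the others follow pol.  The [set_act] detour makes [q] applicable
   to an action of agent [j] once [j == k]. *)
Definition local_kernel (s : S) (k : 'I_n) (q : Ai k -> R) (b : act) : kernel R Ai :=
  fun j c x => if j \in Nd Ed k then (x == b j)%:R
               else if j == k then q (set_act c j x k) else pol j s c x.

Lemma local_kernel_depends_on s (k : 'I_n) q b (j : 'I_n) : (k <= j)%N ->
  depends_on (fun i => (i \in Nd Ed k) || ((k <= i) && (i < j))%N)
    (local_kernel s k q b j).
Proof.
move=> hkj c1 c2 h; apply: funext => x; rewrite /local_kernel; case: ifP => // _.
case: (eqVneq j k) => [ejk|_]; first by subst j; rewrite !set_act_eq.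
by rewrite ((proj2 hpol) j s c1 c2) // => i hi; apply/h/mem_Nd_le.
Qed.

Lemma local_kernel_causal s k q b : causal (local_kernel s k q b).
Proof.
move=> j c c' h; apply: funext => x; rewrite /local_kernel; case: ifP => // _.
case: (eqVneq j k) => [ejk|_]; first by subst j; rewrite !set_act_eq.
by rewrite ((proj2 hpol) j s c c') // => i /mem_Nd_lt; apply: h.
Qed.

Lemma local_kernel_dist s k q b j c :
  j \notin Nd Ed k -> is_dist q -> is_dist (local_kernel s k q b j c).
Proof.
move=> hj [hq1 hq2]; rewrite /local_kernel /is_dist (negbTE hj).
case: (eqVneq j k) => [ejk|_]; last exact: (proj1 hpol).
subst j; split; first by move=> x; rewrite set_act_eq.
by under eq_bigr => x _ do rewrite set_act_eq.
Qed.

Lemma Eloc_seq_expect s k q b c :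
  Eloc P r gamma Ed pol s b q =
  seq_expect (local_kernel s k q b) (agents_from 0) (Q P r gamma (joint_of pol) s) c.
Proof.
rewrite -(sum_prod_kernel _ _ c (local_kernel_causal s k q b)) /Eloc big_mkcond /=.
apply: eq_bigr => a _; rewrite [in RHS](bigID (fun j => j \in Nd Ed k)) /=.
case: ifP => [/forall_inP H|/negbT/forall_inPn [j hj hne]].
  rewrite [X in _ = X * _ * _]big1 ?mul1r; last first.
    by move=> j hj; rewrite /local_kernel hj (eqP (H j hj)) eqxx.
  congr (_ * _); apply: eq_bigr => j hj.
  by rewrite /local_kernel (negbTE hj) set_act_id.
by rewrite (bigD1 j) //= {1}/local_kernel hj (negbTE hne) !mul0r.
Qed.

Lemma joint_of_policy (c : act) : is_joint_policy (joint_of pol).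
Proof.
move=> s; split => [a|].
  by apply: prodr_ge0 => j _; apply: (proj1 (proj1 hpol j s a)).
rewrite -[RHS](@seq_expect_invariant _ _ _ (pol_kernel s) (agents_from 0) (fun _ => 1) c) //.
- rewrite -(sum_prod_kernel _ _ c (pol_kernel_causal s)).
  by apply: eq_bigr => a _; rewrite mulr1.
- by move=> j _ c'; apply: pol_kernel_dist.
Qed.

Section FixedState.
Context {s : S} {Q1 : forall i : 'I_n, S -> Ai i -> R}
  {Q2 : forall i j : 'I_n, S -> Ai i -> Ai j -> R}.
Hypothesis hQ : forall a, Q P r gamma (joint_of pol) s a =
  \sum_(i : 'I_n) Q1 i s (a i)
  + \sum_(i : 'I_n) \sum_(j : 'I_n | (i < j)%N && Ec i j) Q2 i j s (a i) (a j).
Local Notation Qs := (Q P r gamma (joint_of pol) s).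

Section Resample.
Variable k : 'I_n.

Definition Q_pre (a : act) :=
  \sum_(i : 'I_n | (i < k)%N) Q1 i s (a i)
  + \sum_(i : 'I_n) \sum_(j : 'I_n | ((i < j)%N && Ec i j) && (j < k)%N)
      Q2 i j s (a i) (a j).

Definition Q_post (a : act) :=
  \sum_(i : 'I_n | ~~ (i < k)%N) Q1 i s (a i)
  + \sum_(i : 'I_n) \sum_(j : 'I_n | ((i < j)%N && Ec i j) && ~~ (j < k)%N)
      Q2 i j s (a i) (a j).

Lemma Q_split a : Qs a = Q_pre a + Q_post a.
Proof.
rewrite hQ /Q_pre /Q_post (bigID (fun i : 'I_n => (i < k)%N) (fun _ => true)) /=.
rewrite addrACA -big_split /=; congr (_ + _); apply: eq_bigr => i _.
by rewrite (bigID (fun j : 'I_n => (j < k)%N)).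
Qed.

Lemma Q_pre_set_act (j : 'I_n) c x : (k <= j)%N -> Q_pre (set_act c j x) = Q_pre c.
Proof.
move=> hkj; have ne (i : 'I_n) : (i < k)%N -> j != i.
  by move=> hi; apply/eqP => e; move: hi; rewrite -e ltnNge hkj.
rewrite /Q_pre; congr (_ + _).
  by apply: eq_bigr => i hi; rewrite set_act_neq ?ne.
apply: eq_bigr => i _; apply: eq_bigr => j' /andP [/andP [hij _] hj'].
by rewrite !set_act_neq ?ne // (ltn_trans hij hj').
Qed.

(* This is where N_d(k) = N_c(k^[+]) enters: an edge reaching an agent >= k
   from an agent < k starts in N_d(k). *)
Lemma Q_post_depends_on : depends_on (fun i => (i \in Nd Ed k) || (k <= i)%N) Q_post.
Proof.
move=> c c' h; rewrite /Q_post; congr (_ + _).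
  by apply: eq_bigr => i; rewrite -leqNgt => hi; rewrite h // hi orbT.
apply: eq_bigr => i _; apply: eq_bigr => j /andP [/andP [hij he]].
rewrite -leqNgt => hj; rewrite (h j) ?hj ?orbT // (h i) //.
by case: (leqP k i) => hki; rewrite ?orbT // (edge_mem_Nd he hki hj).
Qed.

Definition post_value (c : act) (x : Ai k) :=
  seq_expect (pol_kernel s) (agents_from k.+1) Q_post (set_act c k x).

Lemma seq_expect_Q_set_act c x :
  seq_expect (pol_kernel s) (agents_from k.+1) Qs (set_act c k x)
  = Q_pre c + post_value c x.
Proof.
rewrite (eq_seq_expect _ _ _ _ _ Q_split) seq_expectD seq_expect_invariant.
- by rewrite Q_pre_set_act.
- by move=> j _ c'; apply: pol_kernel_dist.
- by move=> j; rewrite mem_agents_from => hj c' x'; apply/Q_pre_set_act/ltnW.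
Qed.

Definition pre_value (q : Ai k -> R) (c : act) :=
  seq_expect (local_kernel s k q c) (agents_from 0) Q_pre c.

Lemma Nd_notin_self : k \notin Nd Ed k.
Proof. by apply/negP => /mem_Nd_lt; rewrite ltnn. Qed.

Lemma seq_expect_local_post q c : is_dist q ->
  seq_expect (local_kernel s k q c) (agents_from 0) Q_post c
  = \sum_x q x * post_value c x.
Proof.
move=> hq; have hkn : (k <= n)%N by apply: ltnW.
rewrite (@seq_expect_pinned _ _ _ _ Q_post (fun i => i \in Nd Ed k) k c hkn) //.
- rewrite (agents_from_cons (ltn_ord k)) /=.
  have -> : Ordinal (ltn_ord k) = k by apply: val_inj.
  apply: eq_bigr => x _; congr (_ * _).
    by rewrite /local_kernel (negbTE Nd_notin_self) eqxx set_act_eq.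
  apply: eq_seq_expect_kernel => j; rewrite mem_agents_from => hkj c' x'.
  rewrite /local_kernel; case: ifP => [/mem_Nd_lt hjk|_].
    by move: (ltn_trans hkj hjk); rewrite ltnn.
  suff /negbTE -> : j != k by [].
  by apply/eqP => ejk; move: hkj; rewrite ejk ltnn.
- by move=> i /mem_Nd_lt.
- by move=> j _ hj c' x; rewrite /local_kernel hj.
- by move=> j _ hj c'; apply: local_kernel_dist.
apply: seq_expect_depends_on => //; first exact: Q_post_depends_on.
by move=> j; apply: local_kernel_depends_on.
Qed.

Lemma Eloc_split q c : is_dist q ->
  Eloc P r gamma Ed pol s c q = pre_value q c + \sum_x q x * post_value c x.
Proof.
move=> hq; rewrite (Eloc_seq_expect s k q c c) (eq_seq_expect _ _ _ _ _ Q_split).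
by rewrite seq_expectD seq_expect_local_post.
Qed.

Lemma seq_expect_local_pre q c c' : is_dist q ->
  seq_expect (local_kernel s k q c) (agents_from k) Q_pre c' = Q_pre c'.
Proof.
move=> hq; apply: seq_expect_invariant => j; rewrite mem_agents_from => hkj.
  move=> c2; apply: local_kernel_dist => //.
  by apply/negP => /mem_Nd_lt; rewrite ltnNge hkj.
by move=> c2 x; apply: Q_pre_set_act.
Qed.

Lemma pre_value_indep q q' c : is_dist q -> is_dist q' -> pre_value q c = pre_value q' c.
Proof.
move=> hq hq'; apply: (eq_seq_expect_prefix _ _ _ _ (ltnW (ltn_ord k))).
  move=> i hik c' x; rewrite /local_kernel; case: ifP => // _.
  suff /negbTE -> : i != k by [].
  by apply/eqP => eik; move: hik; rewrite eik ltnn.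
by move=> c'; rewrite !seq_expect_local_pre.
Qed.

(* The point mass at y is a feasible deviation of agent k in the local
   optimality condition. *)
Lemma post_value_le c y : post_value c y <= \sum_x pol k s c x * post_value c x.
Proof.
have hpk : is_dist (pol k s c) by apply: (proj1 hpol).
pose d (x : Ai k) : R := (x == y)%:R.
have hd : is_dist d.
  split => [x|]; first by rewrite ler0n.
  by rewrite /d (bigD1 y) //= eqxx big1 ?addr0 // => x /negbTE ->.
have ub : has_ubound
    [set Eloc P r gamma Ed pol s c q | q in [set q : Ai k -> R | is_dist q]].
  exists (pre_value (pol k s c) c + \sum_x `|post_value c x|) => z [q hq <-].
  rewrite (Eloc_split _ _ hq) (pre_value_indep _ _ _ hq hpk) lerD2l.
  apply: le_trans (_ : \sum_x q x * \sum_x' `|post_value c x'| <= _); last first.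
    by rewrite -mulr_suml hq.2 mul1r.
  apply: ler_sum => x _; apply: ler_wpM2l; first exact: hq.1.
  apply: le_trans (ler_norm _) _.
  by rewrite (bigD1 x) //= lerDl sumr_ge0.
have := ub_le_sup ub (ex_intro2 _ _ d hd erefl).
rewrite -hloc !Eloc_split // (pre_value_indep _ _ _ hd hpk) lerD2l.
by rewrite /d sum_delta.
Qed.

Lemma resample_le c y :
  seq_expect (pol_kernel s) (agents_from k.+1) Qs (set_act c k y) <=
  \sum_x pol k s c x * seq_expect (pol_kernel s) (agents_from k.+1) Qs (set_act c k x).
Proof.
under eq_bigr => x _ do rewrite seq_expect_Q_set_act mulrDr.
rewrite seq_expect_Q_set_act big_split /= -mulr_suml.
by rewrite (proj2 (proj1 hpol k s c)) mul1r lerD2l post_value_le.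
Qed.

End Resample.

Lemma Q_le_seq_expect m : (m <= n)%N ->
  forall c, Qs c <= seq_expect (pol_kernel s) (agents_from m) Qs c.
Proof.
move: m; apply: leq_down_ind => [c|m hmn IH c]; first by rewrite agents_from_ge.
rewrite agents_from_cons /=; set om := Ordinal hmn.
by apply: le_trans (resample_le om c (c om)); rewrite set_act_id.
Qed.

Lemma Q_le_expect c : Qs c <= \sum_(a : act) joint_of pol s a * Qs a.
Proof. by rewrite (sum_prod_kernel _ _ c (pol_kernel_causal s)) Q_le_seq_expect. Qed.

End FixedState.

End LocalToGlobal.

Local Open Scope classical_set_scope.

Lemma cvg_sum_fintype (R : realType) (T : finType) (u : T -> nat -> R) (l : T -> R) :
  (forall x, u x @ \oo --> l x) ->
  (fun N => \sum_(x : T) u x N) @ \oo --> \sum_(x : T) l x.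
Proof.
move=> h; apply: (@cvg_big _ _ +%R 0 xpredT _ _ _ _ _ _ _ (fun x _ => h x)).
exact: add_continuous.
Qed.

Lemma norm_avg_le (R : realType) (T : finType) (w f : T -> R) (M : R) :
  is_dist w -> (forall x, `|f x| <= M) -> `|\sum_x w x * f x| <= M.
Proof.
move=> [w0 w1] hf; apply: le_trans (ler_norm_sum _ _ _) _.
apply: le_trans (_ : \sum_x w x * M <= _); last by rewrite -mulr_suml w1 mul1r.
by apply: ler_sum => x _; rewrite normrM ger0_norm //; exact: ler_wpM2l.
Qed.

Section PolicyEvaluation.
Variables (R : realType) (n : nat) (Ai : 'I_n -> finType) (S : finType).
Local Notation act := (jact Ai).
Variables (P : S -> act -> S -> R) (r : S -> act -> R) (gamma : R).
Hypothesis hmg : is_markov_game P gamma.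

Definition V_partial (pi : joint_policy R S Ai) (s : S) : R^nat :=
  series (fun t => gamma ^+ t * ER P r pi t s).

Definition Q_partial (pi : joint_policy R S Ai) (s : S) (a : act) : R^nat :=
  series (fun t => gamma ^+ t * ERa P r pi t s a).

Lemma ER_expect pi t s : ER P r pi t s = \sum_a pi s a * ERa P r pi t s a.
Proof. by case: t. Qed.

Lemma V_partial_expect pi s N : V_partial pi s N = \sum_a pi s a * Q_partial pi s a N.
Proof.
rewrite /V_partial /Q_partial /series /=.
under eq_bigr => t _ do rewrite ER_expect mulr_sumr.
rewrite exchange_big /=; apply: eq_bigr => a _; rewrite mulr_sumr.
by apply: eq_bigr => t _; rewrite mulrCA.
Qed.

Lemma Q_partialS pi s a N :
  Q_partial pi s a N.+1 = r s a + gamma * \sum_s' P s a s' * V_partial pi s' N.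
Proof.
rewrite /V_partial /Q_partial /series /= big_nat_recl //= expr0 mul1r.
congr (_ + _); under eq_bigr => t _ do rewrite exprS /= -mulrA mulr_sumr.
rewrite -mulr_sumr exchange_big /=; congr (_ * _); apply: eq_bigr => s' _.
by rewrite mulr_sumr; apply: eq_bigr => t _; rewrite mulrCA.
Qed.

Definition reward_bound := \sum_(s : S) \sum_(a : act) `|r s a|.

Lemma reward_le s a : `|r s a| <= reward_bound.
Proof.
rewrite /reward_bound (bigD1 s) //= (bigD1 a) //= -addrA lerDl.
by rewrite addr_ge0 ?sumr_ge0 // => *; rewrite sumr_ge0.
Qed.

Lemma ER_bound pi : is_joint_policy pi -> forall t s, `|ER P r pi t s| <= reward_bound.
Proof.
move=> hpi; elim => [|t IH] s /=; apply: norm_avg_le (hpi s) _ => a.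
  exact: reward_le.
exact: norm_avg_le ((proj1 hmg) s a) IH.
Qed.

Lemma ERa_bound pi : is_joint_policy pi ->
  forall t s a, `|ERa P r pi t s a| <= reward_bound.
Proof.
move=> hpi [|t] s a /=; first exact: reward_le.
exact: norm_avg_le ((proj1 hmg) s a) (ER_bound _ hpi t).
Qed.

Lemma discount_ge0 : 0 <= gamma. Proof. exact: (proj2 hmg).1. Qed.

Lemma discount_norm_lt1 : `|gamma| < 1.
Proof. by rewrite ger0_norm ?discount_ge0 //; exact: (proj2 hmg).2. Qed.

Lemma cvg_discounted_series (u : R^nat) : (forall t, `|u t| <= reward_bound) ->
  cvgn (series (fun t => gamma ^+ t * u t)).
Proof.
move=> hu; apply: normed_cvg.
apply: (@series_le_cvg _ _ (geometric reward_bound gamma)).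
- by move=> t; apply: normr_ge0.
- move=> t; apply: geometric_ge0 => //; last exact: discount_ge0.
  exact: le_trans (normr_ge0 _) (hu 0%N).
- move=> t; rewrite /geometric /= normrM normrX ger0_norm ?discount_ge0 // mulrC.
  by apply: ler_wpM2r; [apply: exprn_ge0; exact: discount_ge0|exact: hu].
- exact: is_cvg_geometric_series discount_norm_lt1.
Qed.

Lemma V_partial_cvg pi s : is_joint_policy pi -> cvgn (V_partial pi s).
Proof. by move=> h; apply: cvg_discounted_series => t; apply: ER_bound. Qed.

Lemma Q_partial_cvg pi s a : is_joint_policy pi -> cvgn (Q_partial pi s a).
Proof. by move=> h; apply: cvg_discounted_series => t; apply: ERa_bound. Qed.

Lemma Q_bellman pi s a : is_joint_policy pi ->
  Q P r gamma pi s a = r s a + gamma * \sum_s' P s a s' * V P r gamma pi s'.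
Proof.
move=> hpi; rewrite /Q; apply: cvg_lim => //; rewrite -cvg_shiftS.
have -> : [sequence Q_partial pi s a n0.+1]_n0 =
    (fun N => r s a + gamma * \sum_s' P s a s' * V_partial pi s' N).
  by apply: funext => N /=; rewrite -Q_partialS.
apply: cvgD; first exact: cvg_cst.
apply: cvgMl_tmp; apply: cvg_sum_fintype => s'.
by apply: cvgMl_tmp; exact: V_partial_cvg.
Qed.

Lemma V_expect_Q pi s : is_joint_policy pi ->
  V P r gamma pi s = \sum_a pi s a * Q P r gamma pi s a.
Proof.
move=> hpi; rewrite /V; apply: cvg_lim => //.
have -> : series (fun t => gamma ^+ t * ER P r pi t s) =
    (fun N => \sum_a pi s a * Q_partial pi s a N).
  by apply: funext => N; rewrite -V_partial_expect.
by apply: cvg_sum_fintype => a; apply: cvgMl_tmp; exact: Q_partial_cvg.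
Qed.

Section Improvement.
Variables (pi : joint_policy R S Ai) (C : R).
Hypotheses (hpi : is_joint_policy pi)
  (hQV : forall s a, Q P r gamma pi s a <= V P r gamma pi s)
  (hC : forall s, `|V P r gamma pi s| <= C).

Lemma V_partial_le pi' : is_joint_policy pi' ->
  forall N s, V_partial pi' s N <= V P r gamma pi s + gamma ^+ N * C.
Proof.
move=> hpi'; elim=> [|N IH] s.
  rewrite /V_partial /series /= big_geq // expr0 mul1r.
  have := hC s; rewrite ler_norml; lra.
rewrite V_partial_expect.
apply: le_trans (_ : \sum_a pi' s a * (V P r gamma pi s + gamma ^+ N.+1 * C) <= _).
  apply: ler_sum => a _; apply: ler_wpM2l; first exact: (hpi' s).1.
  apply: (@le_trans _ _ (Q P r gamma pi s a + gamma ^+ N.+1 * C)); last first.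
    by rewrite lerD2r.
  rewrite Q_partialS Q_bellman // -addrA lerD2l exprS -mulrA -mulrDr.
  apply: ler_wpM2l; first exact: discount_ge0.
  apply: le_trans (_ : \sum_s' P s a s' * (V P r gamma pi s' + gamma ^+ N * C) <= _).
    by apply: ler_sum => s' _; apply: ler_wpM2l; [exact: ((proj1 hmg) s a).1|].
  under eq_bigr => s' _ do rewrite mulrDr.
  by rewrite big_split /= -mulr_suml ((proj1 hmg) s a).2 mul1r.
by rewrite -mulr_suml (hpi' s).2 mul1r.
Qed.

Lemma policy_improvement pi' s : is_joint_policy pi' ->
  V P r gamma pi' s <= V P r gamma pi s.
Proof.
move=> hpi'.
have hl : (fun N => V P r gamma pi s + gamma ^+ N * C) @ \oo --> V P r gamma pi s + 0 * C.
  apply: cvgD; first exact: cvg_cst.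
  by apply: cvgMr_tmp; apply: cvg_expr; exact: discount_norm_lt1.
rewrite -[leRHS]addr0 -(mul0r C) -(cvg_lim _ hl) //.
apply: ler_lim; [exact: V_partial_cvg | by apply/cvg_ex; eexists; exact: hl |].
by apply: nearW => N; apply: V_partial_le.
Qed.

End Improvement.

Lemma Q_le_V_optimal pi s : is_joint_policy pi ->
  (forall s a, Q P r gamma pi s a <= V P r gamma pi s) ->
  V P r gamma pi s = Vstar P r gamma s.
Proof.
move=> hpi hQV; pose C := \sum_s' `|V P r gamma pi s'|.
have hC s' : `|V P r gamma pi s'| <= C.
  by rewrite /C (bigD1 s') //= lerDl sumr_ge0.
apply/eqP; rewrite eq_le; apply/andP; split.
  apply: ub_le_sup; last by exists pi.
  exists (V P r gamma pi s) => _ [pi' hpi' <-].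
  exact: policy_improvement hpi hQV hC pi' s hpi'.
apply: ge_sup; first by exists (V P r gamma pi s), pi.
by move=> _ [pi' hpi' <-]; exact: policy_improvement hpi hQV hC pi' s hpi'.
Qed.

(* Without joint actions there are no policies: Vstar is the supremum of the
   empty set, 0, and so is every V. *)
Lemma V_eq_Vstar_no_action pi s : (act -> False) ->
  V P r gamma pi s = Vstar P r gamma s.
Proof.
move=> hne; have e0 (F : act -> R) : \sum_(a : act) F a = 0.
  by apply: big1 => a _; case: (hne a).
have -> : Vstar P r gamma s = 0.
  rewrite /Vstar -[RHS](sup0 R); congr sup; apply/seteqP; split => // z [pi' hpi' _].
  by move: (hpi' s).2; rewrite e0 => /eqP; rewrite eq_sym oner_eq0.
rewrite /V; have -> : series (fun t => gamma ^+ t * ER P r pi t s) = fun=> 0.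
  apply: funext => N; rewrite /series /=; apply: big1 => t _.
  by case: t => [|t] /=; rewrite e0 mulr0.
exact: lim_cst.
Qed.

End PolicyEvaluation.

Theorem theorem1 (R : realType) (n : nat) (S : finType) (Ai : 'I_n -> finType)
    (P : S -> jact Ai -> S -> R) (r : S -> jact Ai -> R) (gamma : R)
    (Ed Ec : rel 'I_n) (pol : ind_policy R S Ai) :
  is_markov_game P gamma ->
  topo_dag Ed ->
  ind_policies_on Ed pol ->
  locally_optimal P r gamma Ed pol ->
  undirected Ec ->
  is_CG Ec (Q P r gamma (joint_of pol)) ->
  (forall i : 'I_n, Nd Ed i = Nc Ec (iplus i)) ->
  forall s : S, V P r gamma (joint_of pol) s = Vstar P r gamma s.
Proof.
move=> hmg hEd hpol hloc [hEc _] [Q1 [Q2 hCG]] hNd s.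
have [[c _]|hne] := pselect (exists c : jact Ai, True); last first.
  by apply: V_eq_Vstar_no_action => c; apply: hne; exists c.
have hpi := joint_of_policy hEd hpol c.
apply: Q_le_V_optimal => // s' a; rewrite V_expect_Q //.
exact: (Q_le_expect hEd hpol hloc hEc hNd (hCG s')).
Qed.
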